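(* Let $R\ge1$, $\Gamma\ge1$, $1\le s_1\le n_1$, $1\le s_2\le n_2$, and assume $s_1/n_1\le s_2/n_2$. Then for $0<\varepsilon<6\Gamma\sqrt R$, $\log N(K^{R,\Gamma}_{s_1,s_2},\|\cdot\|_F,\varepsilon)$ is at most $$\begin{cases}R(n_1+n_2+1)\log\!\big(\frac{36\Gamma R}{\varepsilon}\big), & 0<\varepsilon<12\Gamma\sqrt{\frac{Rs_1}{n_1}},\\[4pt] \frac{144\Gamma^2R^2s_1}{\varepsilon^2}\log\!\big(\frac{9\varepsilon n_1}{6\Gamma\sqrt Rs_1}\big)+R(n_2+1)\log\!\big(\frac{36\Gamma R}{\varepsilon}\big), & 12\Gamma\sqrt{\frac{Rs_1}{n_1}}\le\varepsilon<12\Gamma\sqrt{\frac{Rs_2}{n_2}},\\[4pt] \frac{144\Gamma^2R^2(s_1+s_2)}{\varepsilon^2}\log\!\big(\frac{9\varepsilon n_1}{6\Gamma\sqrt Rs_1}\big)+R\log\!\big(\frac{18\Gamma R}{\varepsilon}\big), & 12\Gamma\sqrt{\frac{Rs_2}{n_2}}\le\varepsilon<6\Gamma\sqrt R.\end{cases}$$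
   Context: $N(M,\|\cdot\|,\varepsilon)$ is the minimal number of $\|\cdot\|$-balls of radius $\varepsilon$ needed to cover $M$. For $n\ge1,s>0$: $K_{n,s}=\{z\in\mathbb{R}^n:\|z\|_2\le1,\|z\|_1\le\sqrt s\}$. $K^{R,\Gamma}_{s_1,s_2}$ is the set of $Z\in\mathbb{R}^{n_1\times n_2}$ of the form $Z=\sum_{r=1}^R\sigma_ru^r(v^r)^T$ with $u^r\in K_{n_1,s_1}$, $v^r\in K_{n_2,s_2}$, $\|u^r\|_2=\|v^r\|_2=1$ for all $r$, and $\sigma\in\mathbb{R}^R$, $\|\sigma\|_2\le\Gamma$. *)

From Stdlib Require Export Reals.
Open Scope R_scope.

Fixpoint rsum (n : nat) (f : nat -> R) : R :=
  match n with
  | O => 0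
  | S m => rsum m f + f m
  end.

(* vectors of R^n are represented by u : nat -> R, only indices < n matter *)
Definition norm2 (n : nat) (u : nat -> R) : R := sqrt (rsum n (fun i => (u i) ^ 2)).
Definition norm1 (n : nat) (u : nat -> R) : R := rsum n (fun i => Rabs (u i)).

Definition K_ns (n : nat) (s : R) (z : nat -> R) : Prop :=
  norm2 n z <= 1 /\ norm1 n z <= sqrt s.

(* matrices of R^{n1 x n2}: Z : nat -> nat -> R, only i < n1, j < n2 matter *)
Definition frob (n1 n2 : nat) (Z : nat -> nat -> R) : R :=
  sqrt (rsum n1 (fun i => rsum n2 (fun j => (Z i j) ^ 2))).

Definition K_RG (Rk : nat) (Gamma : R) (n1 n2 : nat) (s1 s2 : R)
  (Z : nat -> nat -> R) : Prop :=
  exists (sigma : nat -> R) (u v : nat -> nat -> R),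
    (forall r, (r < Rk)%nat ->
       K_ns n1 s1 (u r) /\ K_ns n2 s2 (v r) /\
       norm2 n1 (u r) = 1 /\ norm2 n2 (v r) = 1) /\
    norm2 Rk sigma <= Gamma /\
    (forall i j, (i < n1)%nat -> (j < n2)%nat ->
       Z i j = rsum Rk (fun r => sigma r * u r i * v r j)).

Definition frob_covered_by (n1 n2 : nat) (M : (nat -> nat -> R) -> Prop)
  (eps : R) (k : nat) : Prop :=
  exists c : nat -> nat -> nat -> R,
    forall Z, M Z -> exists i, (i < k)%nat /\
      frob n1 n2 (fun a b => Z a b - c i a b) <= eps.

Definition is_frob_covering_number (n1 n2 : nat) (M : (nat -> nat -> R) -> Prop)
  (eps : R) (N : nat) : Prop :=
  frob_covered_by n1 n2 M eps N /\
  (forall k, frob_covered_by n1 n2 M eps k -> (N <= k)%nat).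

From Stdlib Require Import Reals Lra Lia Psatz ZArith Classical Wf_nat.
Open Scope R_scope.

(* An element of K^{R,Gamma}_{s1,s2} is sum_r sigma_r u_r v_r^T, and replacing the factors by
   nearby ones moves it in Frobenius norm by at most (du + dv) |sigma|_1 + |sigma - sigma'|_1
   (frob_lowrank_sub_le), with |sigma|_1 <= sqrt R Gamma.  So nets of the factor sets multiply to
   a net of K^{R,Gamma}_{s1,s2}.  Every net is obtained by rounding to a scaled integer grid,
   whose points in an l1 ball are counted through sum_{a in Z^n} t^|a|_1 = ((1+t)/(1-t))^n.
   With step rho d / sqrt n this gives the volumetric bound n (1 + ln (1 + 2/d)) for Euclidean
   balls; with step sqrt s / m, rounding toward zero gives |x - c|_2^2 <= h |x|_1 <= s / m, a
   lattice form of Maurey's lemma, and the bound (s/d^2 + 1) ln A + 3n/A for K_{n,s}.  The three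
   regimes differ in which factors receive the sparse net. *)

(** * Finite sums, norms and logarithms *)

Lemma rsum_ext n f g : (forall i, (i < n)%nat -> f i = g i) -> rsum n f = rsum n g.
Proof.
  induction n as [|n IH]; intros H; simpl; [reflexivity|].
  rewrite IH, H; [reflexivity|lia|intros; apply H; lia].
Qed.

Lemma rsum_le n f g : (forall i, (i < n)%nat -> f i <= g i) -> rsum n f <= rsum n g.
Proof.
  induction n as [|n IH]; intros H; simpl; [lra|].
  apply Rplus_le_compat; [apply IH; intros; apply H|apply H]; lia.
Qed.

Lemma rsum_plus n f g : rsum n (fun i => f i + g i) = rsum n f + rsum n g.
Proof. induction n as [|n IH]; simpl; [lra|]. rewrite IH; ring. Qed.

Lemma rsum_scal n c f : rsum n (fun i => c * f i) = c * rsum n f.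
Proof. induction n as [|n IH]; simpl; [ring|]. rewrite IH; ring. Qed.

Lemma rsum_minus n f g : rsum n (fun i => f i - g i) = rsum n f - rsum n g.
Proof.
  replace (rsum n f - rsum n g) with (rsum n f + -1 * rsum n g) by ring.
  rewrite <- rsum_scal, <- rsum_plus. apply rsum_ext; intros; ring.
Qed.

Lemma rsum_const n c : rsum n (fun _ => c) = INR n * c.
Proof. induction n as [|n IH]; simpl rsum; [simpl; ring|]. rewrite IH, S_INR; ring. Qed.

Lemma rsum_nonneg n f : (forall i, (i < n)%nat -> 0 <= f i) -> 0 <= rsum n f.
Proof. intros H. rewrite <- (Rmult_0_r (INR n)), <- rsum_const. now apply rsum_le. Qed.

Lemma discriminant_le A B C :
  (forall l, 0 <= A * l * l - 2 * B * l + C) -> 0 <= A -> B * B <= A * C.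
Proof.
  intros H HA. destruct (Req_dec A 0) as [->|HA0].
  - destruct (Req_dec B 0) as [->|HB]; [specialize (H 0); nra|].
    specialize (H ((C + 1) / (2 * B))).
    replace (2 * B * ((C + 1) / (2 * B))) with (C + 1) in H by (field; exact HB). nra.
  - specialize (H (B / A)).
    replace (A * (B / A) * (B / A) - 2 * B * (B / A)) with (- (B * B) / A) in H by (field; exact HA0).
    assert (HA' : 0 < A) by lra.
    apply Rmult_le_reg_r with (/ A); [now apply Rinv_0_lt_compat|].
    replace (A * C * / A) with C by (field; lra). unfold Rdiv in H. lra.
Qed.

Lemma ln_le x y : 0 < x -> x <= y -> ln x <= ln y.
Proof. intros Hx [Hxy|<-]; [now apply Rlt_le, ln_increasing|lra]. Qed.

Lemma ln_le_sub1 x : 0 < x -> ln x <= x - 1.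
Proof. intros Hx. rewrite <- (ln_exp (x - 1)). apply ln_le; [exact Hx|]. pose proof (exp_ineq1_le (x - 1)). lra. Qed.

Lemma ln_nonneg x : 1 <= x -> 0 <= ln x.
Proof. intros H. rewrite <- ln_1. apply ln_le; lra. Qed.

(* Stdlib's [ln] is 0 on nonpositive arguments. *)
Lemma ln_0 : ln 0 = 0.
Proof. unfold ln. destruct (Rlt_dec 0 0) as [H|]; [destruct (Rlt_irrefl 0 H)|reflexivity]. Qed.

Lemma sqrt_INR_ge1 k : (1 <= k)%nat -> 1 <= sqrt (INR k).
Proof. intros Hk. rewrite <- sqrt_1. apply sqrt_le_1_alt, (le_INR 1), Hk. Qed.

Lemma norm2_nonneg n x : 0 <= norm2 n x.
Proof. apply sqrt_pos. Qed.

Lemma norm2_sq n x : norm2 n x ^ 2 = rsum n (fun i => x i ^ 2).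
Proof. apply pow2_sqrt, rsum_nonneg; intros; apply pow2_ge_0. Qed.

Lemma norm2_le n x r : 0 <= r -> rsum n (fun i => x i ^ 2) <= r ^ 2 -> norm2 n x <= r.
Proof. intros Hr H. rewrite <- (sqrt_pow2 r Hr). now apply sqrt_le_1_alt. Qed.

Lemma norm2_mono n x y : (forall i, (i < n)%nat -> x i ^ 2 <= y i ^ 2) -> norm2 n x <= norm2 n y.
Proof. intros H. apply norm2_le; [apply norm2_nonneg|]. rewrite norm2_sq. now apply rsum_le. Qed.

Lemma norm2_abs n x : norm2 n (fun i => Rabs (x i)) = norm2 n x.
Proof. unfold norm2. f_equal. apply rsum_ext; intros; apply pow2_abs. Qed.

Lemma norm2_scal n c x : norm2 n (fun i => c * x i) = Rabs c * norm2 n x.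
Proof.
  unfold norm2. rewrite <- (sqrt_pow2 (Rabs c) (Rabs_pos c)), <- sqrt_mult_alt by apply pow2_ge_0.
  f_equal. rewrite pow2_abs, <- rsum_scal. apply rsum_ext; intros; ring.
Qed.

Lemma norm2_const n c : norm2 n (fun _ => c) = sqrt (INR n) * Rabs c.
Proof. unfold norm2. rewrite rsum_const, sqrt_mult_alt, <- pow2_abs, sqrt_pow2 by (apply pos_INR || apply Rabs_pos). reflexivity. Qed.

Lemma rsum_cauchy_schwarz n x y : rsum n (fun i => x i * y i) <= norm2 n x * norm2 n y.
Proof.
  set (B := rsum n (fun i => x i * y i)).
  assert (HB : B * B <= norm2 n x ^ 2 * norm2 n y ^ 2).
  { rewrite !norm2_sq. apply discriminant_le; [|apply rsum_nonneg; intros; apply pow2_ge_0].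
    intros l. replace (_ * l * l - _ * l + _) with (rsum n (fun i => (x i * l - y i) ^ 2)).
    - apply rsum_nonneg; intros; apply pow2_ge_0.
    - rewrite (rsum_ext _ _ (fun i => (l * l) * x i ^ 2 + (-2 * l) * (x i * y i) + y i ^ 2))
        by (intros; ring).
      rewrite !rsum_plus, !rsum_scal. unfold B; ring. }
  assert (Hp : 0 <= norm2 n x * norm2 n y) by (apply Rmult_le_pos; apply norm2_nonneg).
  destruct (Rle_lt_dec B (norm2 n x * norm2 n y)) as [|Hlt]; [assumption|].
  assert (0 < (B - norm2 n x * norm2 n y) * (B + norm2 n x * norm2 n y))
    by (apply Rmult_lt_0_compat; lra).
  nra.
Qed.

Lemma norm2_triangle n x y : norm2 n (fun i => x i + y i) <= norm2 n x + norm2 n y.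
Proof.
  pose proof (norm2_nonneg n x). pose proof (norm2_nonneg n y).
  apply norm2_le; [lra|].
  replace (rsum n (fun i => (x i + y i) ^ 2))
    with (norm2 n x ^ 2 + norm2 n y ^ 2 + 2 * rsum n (fun i => x i * y i)).
  - pose proof (rsum_cauchy_schwarz n x y). nra.
  - rewrite !norm2_sq, <- rsum_scal, <- !rsum_plus. apply rsum_ext; intros; ring.
Qed.

Lemma norm1_le_norm2 n x : norm1 n x <= sqrt (INR n) * norm2 n x.
Proof.
  pose proof (rsum_cauchy_schwarz n (fun i => Rabs (x i)) (fun _ => 1)) as H.
  rewrite norm2_abs, norm2_const, Rabs_R1 in H. unfold norm1.
  rewrite (rsum_ext _ _ (fun i => Rabs (x i) * 1)) by (intros; ring). lra.
Qed.

Lemma norm2_ext n x y : (forall i, (i < n)%nat -> x i = y i) -> norm2 n x = norm2 n y.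
Proof. intros H. unfold norm2. f_equal. apply rsum_ext; intros i Hi; now rewrite H. Qed.

Lemma norm1_ext n x y : (forall i, (i < n)%nat -> x i = y i) -> norm1 n x = norm1 n y.
Proof. intros H. unfold norm1. apply rsum_ext; intros i Hi; now rewrite H. Qed.

Lemma frob_ext n1 n2 A B :
  (forall i j, (i < n1)%nat -> (j < n2)%nat -> A i j = B i j) -> frob n1 n2 A = frob n1 n2 B.
Proof. intros H. unfold frob. f_equal. apply rsum_ext; intros; apply rsum_ext; intros; now rewrite H. Qed.

Lemma frob_rows n1 n2 A : frob n1 n2 A = norm2 n1 (fun i => norm2 n2 (A i)).
Proof. unfold frob, norm2 at 1. f_equal. apply rsum_ext; intros; symmetry; apply norm2_sq. Qed.

Lemma frob_zero n1 n2 : frob n1 n2 (fun _ _ => 0) = 0.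
Proof.
  unfold frob. rewrite (rsum_ext n1 _ (fun _ => 0)), rsum_const, Rmult_0_r; [apply sqrt_0|].
  intros; rewrite rsum_const; ring.
Qed.

Lemma frob_triangle n1 n2 A B :
  frob n1 n2 (fun i j => A i j + B i j) <= frob n1 n2 A + frob n1 n2 B.
Proof.
  rewrite !frob_rows. eapply Rle_trans; [|apply norm2_triangle].
  apply norm2_mono; intros i _. apply pow_incr. split; [apply norm2_nonneg|apply norm2_triangle].
Qed.

Lemma frob_rsum_le n1 n2 K F :
  frob n1 n2 (fun i j => rsum K (fun r => F r i j)) <= rsum K (fun r => frob n1 n2 (F r)).
Proof.
  induction K as [|K IH]; simpl rsum.
  - rewrite frob_zero; lra.
  - eapply Rle_trans; [apply frob_triangle|]. lra.
Qed.

Lemma frob_rank1 n1 n2 c a b :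
  frob n1 n2 (fun i j => c * a i * b j) = Rabs c * norm2 n1 a * norm2 n2 b.
Proof.
  rewrite frob_rows.
  rewrite (norm2_ext n1 _ (fun i => norm2 n2 b * Rabs (c * a i))).
  - rewrite norm2_scal, norm2_abs, norm2_scal, Rabs_pos_eq by apply norm2_nonneg. ring.
  - intros i _. rewrite norm2_scal. ring.
Qed.

Lemma frob_rank1_sub_le n1 n2 c c' a a' b b' :
  frob n1 n2 (fun i j => c * a i * b j - c' * a' i * b' j)
  <= Rabs c * (norm2 n1 (fun i => a i - a' i) * norm2 n2 b + norm2 n1 a' * norm2 n2 (fun j => b j - b' j))
     + Rabs (c - c') * norm2 n1 a' * norm2 n2 b'.
Proof.
  rewrite (frob_ext _ _ _ (fun i j => (c * (a i - a' i) * b j + c * a' i * (b j - b' j))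
                                      + (c - c') * a' i * b' j)) by (intros; ring).
  eapply Rle_trans; [apply frob_triangle|]. rewrite frob_rank1.
  eapply Rle_trans; [apply Rplus_le_compat_r, frob_triangle|]. rewrite !frob_rank1.
  lra.
Qed.

Definition lowrank (Rk : nat) (sg : nat -> R) (u v : nat -> nat -> R) (i j : nat) : R :=
  rsum Rk (fun r => sg r * u r i * v r j).

Lemma frob_lowrank_sub_le n1 n2 Rk sg sg' u u' v v' du dv :
  (forall r, (r < Rk)%nat ->
     norm2 n2 (v r) <= 1 /\ norm2 n1 (u' r) <= 1 /\ norm2 n2 (v' r) <= 1 /\
     norm2 n1 (fun i => u r i - u' r i) <= du /\ norm2 n2 (fun j => v r j - v' r j) <= dv) ->
  frob n1 n2 (fun i j => lowrank Rk sg u v i j - lowrank Rk sg' u' v' i j)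
  <= (du + dv) * norm1 Rk sg + norm1 Rk (fun r => sg r - sg' r).
Proof.
  intros H. unfold lowrank. rewrite (frob_ext _ _ _ (fun i j => rsum Rk (fun r =>
    sg r * u r i * v r j - sg' r * u' r i * v' r j))) by (intros; symmetry; apply rsum_minus).
  eapply Rle_trans; [apply frob_rsum_le|].
  unfold norm1. rewrite <- rsum_scal, <- rsum_plus. apply rsum_le; intros r Hr.
  destruct (H r Hr) as (Hv & Hu' & Hv' & Hdu & Hdv).
  eapply Rle_trans; [apply frob_rank1_sub_le|].
  pose proof (Rabs_pos (sg r)). pose proof (Rabs_pos (sg r - sg' r)).
  pose proof (norm2_nonneg n1 (fun i => u r i - u' r i)). pose proof (norm2_nonneg n1 (u' r)).
  pose proof (norm2_nonneg n2 (fun j => v r j - v' r j)). pose proof (norm2_nonneg n2 (v' r)).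
  assert (norm2 n1 (fun i => u r i - u' r i) * norm2 n2 (v r) <= du) by nra.
  assert (norm2 n1 (u' r) * norm2 n2 (fun j => v r j - v' r j) <= dv) by nra.
  assert (norm2 n1 (u' r) * norm2 n2 (v' r) <= 1) by nra.
  nra.
Qed.

(** * Nets *)

(* [Q x c] says that [c] is an admissible centre for [x]. *)
Definition net {X : Type} (k : nat) (A : X -> Prop) (Q : X -> X -> Prop) : Prop :=
  exists c : nat -> X, forall x, A x -> exists i, (i < k)%nat /\ Q x (c i).

Lemma net_map {X Y : Type} k (A : X -> Prop) Q (B : Y -> Prop) Q' (F : X -> Y) :
  net k A Q -> (forall y, B y -> exists x, A x /\ forall c, Q x c -> Q' y (F c)) -> net k B Q'.
Proof.
  intros [c Hc] H. exists (fun i => F (c i)). intros y Hy.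
  destruct (H y Hy) as [x [Hx HQ]]. destruct (Hc x Hx) as [i [Hi Hq]]. eauto.
Qed.

Lemma net_weaken {X : Type} k (A B : X -> Prop) (Q Q' : X -> X -> Prop) :
  net k A Q -> (forall x, B x -> A x) -> (forall x c, B x -> Q x c -> Q' x c) -> net k B Q'.
Proof. intros HA HBA HQ. apply (net_map _ _ _ _ _ (fun x => x) HA). intros x Hx. eauto. Qed.

Lemma net_union {X : Type} k1 k2 (A B : X -> Prop) Q :
  net k1 A Q -> net k2 B Q -> net (k1 + k2) (fun x => A x \/ B x) Q.
Proof.
  intros [c1 H1] [c2 H2]. exists (fun i => if Nat.ltb i k1 then c1 i else c2 (i - k1)%nat).
  intros x [Hx|Hx].
  - destruct (H1 x Hx) as [i [Hi Hq]]. exists i. split; [lia|].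
    destruct (Nat.ltb_spec i k1); [assumption|lia].
  - destruct (H2 x Hx) as [i [Hi Hq]]. exists (k1 + i)%nat. split; [lia|].
    destruct (Nat.ltb_spec (k1 + i) k1); [lia|]. now replace (k1 + i - k1)%nat with i by lia.
Qed.

Lemma net_prod {X Y : Type} k1 k2 (A : X -> Prop) (B : Y -> Prop) Q1 Q2 :
  net k1 A Q1 -> net k2 B Q2 ->
  net (k1 * k2) (fun p => A (fst p) /\ B (snd p))
      (fun p q => Q1 (fst p) (fst q) /\ Q2 (snd p) (snd q)).
Proof.
  intros [c1 H1] [c2 H2]. exists (fun i => (c1 (i / k2)%nat, c2 (i mod k2)%nat)).
  intros [x y] [Hx Hy]. destruct (H1 x Hx) as [i [Hi Hq1]]. destruct (H2 y Hy) as [j [Hj Hq2]].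
  exists (i * k2 + j)%nat. split; [nia|]. simpl.
  rewrite Nat.div_add_l, Nat.div_small, Nat.add_0_r by lia.
  rewrite Nat.add_comm, Nat.Div0.mod_add, Nat.mod_small by lia. auto.
Qed.

Lemma net_pow {X : Type} (x0 : X) k (A : X -> Prop) Q N : net k A Q ->
  net (k ^ N) (fun f : nat -> X => forall r, (r < N)%nat -> A (f r))
              (fun f g => forall r, (r < N)%nat -> Q (f r) (g r)).
Proof.
  intros Hn. induction N as [|N IH].
  - exists (fun _ _ => x0). intros f _. exists 0%nat. split; [simpl; lia|]. intros; lia.
  - rewrite Nat.pow_succ_r', Nat.mul_comm.
    apply (net_map _ _ _ _ _ (fun p r => if Nat.ltb r N then fst p r else snd p : X)
      (net_prod _ _ _ _ _ _ IH Hn)).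
    intros f Hf. exists (f, f N). split; [split; [intros; apply Hf; lia|apply Hf; lia]|].
    intros [g x] [Hg Hx] r Hr. simpl in *. destruct (Nat.ltb_spec r N) as [|].
    + now apply Hg.
    + now replace r with N by lia.
Qed.

Definition log_net {X : Type} (L : R) (A : X -> Prop) (Q : X -> X -> Prop) : Prop :=
  exists k, (1 <= k)%nat /\ ln (INR k) <= L /\ net k A Q.

Lemma log_net_weaken {X : Type} L L' (A B : X -> Prop) (Q Q' : X -> X -> Prop) :
  log_net L A Q -> L <= L' -> (forall x, B x -> A x) -> (forall x c, B x -> Q x c -> Q' x c) ->
  log_net L' B Q'.
Proof.
  intros (k & Hk & HL & Hn) HLL' HBA HQ. exists k. split; [exact Hk|]. split; [lra|].
  exact (net_weaken _ _ _ _ _ Hn HBA HQ).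
Qed.

(** * Integer points in l1 balls *)

Fixpoint natsum (n : nat) (f : nat -> nat) : nat :=
  match n with O => O | S m => (natsum m f + f m)%nat end.

Lemma natsum_INR n f : INR (natsum n f) = rsum n (fun j => INR (f j)).
Proof. induction n as [|n IH]; simpl natsum; simpl rsum; [reflexivity|]. now rewrite plus_INR, IH. Qed.

Definition int_l1_ball (n m : nat) (a : nat -> Z) : Prop :=
  (natsum n (fun j => Z.abs_nat (a j)) <= m)%nat.

Definition agree (n : nat) (a b : nat -> Z) : Prop := forall j, (j < n)%nat -> a j = b j.

(* The number of integer vectors of length [n] and l1 norm at most [m], split according to
   the last coordinate: [0], or [+-(b+1)] with the rest of norm at most [m - (b+1)]. *)
Fixpoint lattice_count (n m : nat) : nat :=
  match n with
  | O => 1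
  | S n' => lattice_count n' m + 2 * natsum m (fun b => lattice_count n' (m - S b))
  end.

Lemma lattice_count_pos n m : (1 <= lattice_count n m)%nat.
Proof. induction n; simpl; lia. Qed.

Lemma net_fix_last n m k z : net k (int_l1_ball n m) (agree n) ->
  net k (fun a => a n = z /\ int_l1_ball n m a) (agree (S n)).
Proof.
  intros H. apply (net_map _ _ _ _ _ (fun c j => if Nat.eqb j n then z else c j) H).
  intros a [Ha HL]. exists a. split; [assumption|]. intros c Hc j Hj.
  destruct (Nat.eqb_spec j n); [now subst|apply Hc; lia].
Qed.

Lemma net_int_l1_ball n m : net (lattice_count n m) (int_l1_ball n m) (agree n).
Proof.
  revert m. induction n as [|n IHn]; intros m.
  - exists (fun _ _ => 0%Z). intros a _. exists 0%nat. split; [simpl; lia|]. intros j Hj; lia.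
  - assert (Hlast : forall b, net (2 * natsum b (fun b' => lattice_count n (m - S b')))
       (fun a => int_l1_ball (S n) m a /\ (1 <= Z.abs_nat (a n) <= b)%nat) (agree (S n))).
    { induction b as [|b IHb].
      - exists (fun _ _ => 0%Z). intros a [_ H]; lia.
      - simpl natsum. replace (2 * (_ + lattice_count n (m - S b)))%nat with
          (2 * natsum b (fun b' => lattice_count n (m - S b')) + lattice_count n (m - S b)
           + lattice_count n (m - S b))%nat by lia.
        eapply net_weaken; [apply net_union; [apply net_union|]| |intros; eassumption];
          [apply IHb
          |apply (net_fix_last n (m - S b) _ (Z.of_nat (S b)) (IHn _))
          |apply (net_fix_last n (m - S b) _ (- Z.of_nat (S b))%Z (IHn _))|].
        intros a [HL Hb]. unfold int_l1_ball in *. simpl natsum in HL.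
        destruct (Nat.eq_dec (Z.abs_nat (a n)) (S b)) as [E|E].
        + assert (natsum n (fun j => Z.abs_nat (a j)) <= m - S b)%nat by lia.
          assert (a n = Z.of_nat (S b) \/ a n = (- Z.of_nat (S b))%Z) as [|] by lia;
            [left; right|right]; split; assumption.
        + left; left; split; [assumption|lia]. }
    simpl lattice_count.
    eapply net_weaken;
      [apply net_union; [apply (net_fix_last n m _ 0%Z (IHn m))|apply (Hlast m)]
      | |intros; eassumption].
    intros a HL. unfold int_l1_ball in *. simpl natsum in HL.
    destruct (Z.eq_dec (a n) 0); [left|right]; split; (assumption || lia).
Qed.

Lemma rsum_geometric_le t b : 0 <= t < 1 -> rsum b (fun i => t ^ S i) <= t / (1 - t).
Proof.
  intros Ht. assert (E : rsum b (fun i => t ^ S i) * (1 - t) = t - t ^ S b).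
  { induction b as [|b IH]; cbn [rsum]; [simpl; ring|]. rewrite Rmult_plus_distr_r, IH. simpl; ring. }
  assert (0 <= t ^ S b) by (apply pow_le; lra).
  apply Rmult_le_reg_r with (1 - t); [lra|]. unfold Rdiv. rewrite Rmult_assoc, Rinv_l; lra.
Qed.

(* The generating function of integer vectors by l1 norm is ((1+t)/(1-t))^n. *)
Lemma lattice_count_le t : 0 < t < 1 -> forall n m,
  INR (lattice_count n m) * t ^ m <= ((1 + t) / (1 - t)) ^ n.
Proof.
  intros Ht n. set (g := (1 + t) / (1 - t)).
  induction n as [|n IH]; intros m.
  - simpl. assert (t ^ m <= 1) by (rewrite <- (pow1 m); apply pow_incr; lra). lra.
  - cbn [lattice_count]. rewrite plus_INR, mult_INR, natsum_INR.
    assert (Hg : 0 <= g ^ n) by (apply pow_le; unfold g; apply Rmult_le_pos; [lra|apply Rlt_le, Rinv_0_lt_compat; lra]).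
    assert (Hsum : rsum m (fun b => INR (lattice_count n (m - S b))) * t ^ m
                   <= g ^ n * (t / (1 - t))).
    { rewrite Rmult_comm, <- rsum_scal.
      eapply Rle_trans; [|apply Rmult_le_compat_l, rsum_geometric_le; lra].
      rewrite <- rsum_scal. apply rsum_le; intros b Hb.
      replace (t ^ m) with (t ^ (m - S b) * t ^ S b) by (rewrite <- pow_add; f_equal; lia).
      specialize (IH (m - S b)%nat). pose proof (pow_le t (S b) ltac:(lra)). nra. }
    replace (g ^ S n) with (g ^ n + 2 * (g ^ n * (t / (1 - t)))) by (unfold g; simpl; field; lra).
    specialize (IH m). simpl INR. lra.
Qed.

Lemma ln_lattice_count_le t n m : 0 < t < 1 ->
  ln (INR (lattice_count n m)) <= INR n * ln ((1 + t) / (1 - t)) + INR m * ln (/ t).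
Proof.
  intros Ht. pose proof (lattice_count_pos n m) as Hk. apply le_INR in Hk. simpl INR in Hk.
  assert (Htm : 0 < t ^ m) by (apply pow_lt; lra).
  assert (Hg : 0 < (1 + t) / (1 - t)) by (apply Rdiv_lt_0_compat; lra).
  rewrite <- !ln_pow by (try apply Rinv_0_lt_compat; lra).
  rewrite <- ln_mult by (apply pow_lt; try apply Rinv_0_lt_compat; lra).
  apply ln_le; [lra|].
  assert (E : t ^ m * (/ t) ^ m = 1) by (rewrite <- Rpow_mult_distr, Rinv_r, pow1; lra).
  replace (INR (lattice_count n m)) with (INR (lattice_count n m) * t ^ m * (/ t) ^ m)
    by (rewrite Rmult_assoc, E; ring).
  apply Rmult_le_compat_r; [apply pow_le, Rlt_le, Rinv_0_lt_compat; lra|]. now apply lattice_count_le.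
Qed.

(** * Grid nets *)

(* Rounding toward zero: the rounded point never leaves a ball (in any l_p norm) around 0. *)
Definition round0 (y : R) : Z := if Rle_dec 0 y then Int_part y else (- Int_part (- y))%Z.

Lemma Int_part_nonneg_bounds y : 0 <= y -> 0 <= IZR (Int_part y) <= y /\ y - 1 < IZR (Int_part y).
Proof.
  intros Hy. destruct (base_Int_part y) as [H1 H2].
  assert (-1 < Int_part y)%Z by (apply lt_IZR; lra).
  repeat split; [apply IZR_le; lia|lra|lra].
Qed.

Lemma round0_spec y : Rabs (IZR (round0 y)) <= Rabs y /\
  Rabs (y - IZR (round0 y)) <= 1 /\ Rabs (y - IZR (round0 y)) <= Rabs y.
Proof.
  unfold round0. destruct (Rle_dec 0 y) as [Hy|Hy].
  - destruct (Int_part_nonneg_bounds y Hy).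
    unfold Rabs; repeat destruct Rcase_abs; repeat split; lra.
  - rewrite opp_IZR. destruct (Int_part_nonneg_bounds (- y)); [lra|].
    unfold Rabs; repeat destruct Rcase_abs; repeat split; lra.
Qed.

Lemma grid_round_spec h x : 0 < h ->
  let r := h * IZR (round0 (x / h)) in
  Rabs r <= Rabs x /\ (x - r) ^ 2 <= h ^ 2 /\ (x - r) ^ 2 <= h * Rabs x.
Proof.
  intros Hh r. destruct (round0_spec (x / h)) as (H1 & H2 & H3).
  set (z := IZR (round0 (x / h))) in *.
  assert (Er : Rabs r = h * Rabs z) by (unfold r; rewrite Rabs_mult, Rabs_pos_eq; lra).
  assert (Ex : Rabs x = h * Rabs (x / h)).
  { replace x with (h * (x / h)) at 1 by (field; lra). rewrite Rabs_mult, Rabs_pos_eq; lra. }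
  assert (Ed : Rabs (x - r) = h * Rabs (x / h - z)).
  { replace (x - r) with (h * (x / h - z)) by (unfold r; field; lra).
    rewrite Rabs_mult, Rabs_pos_eq; lra. }
  rewrite <- (pow2_abs (x - r)), Er, Ex, Ed.
  set (a := Rabs (x / h - z)) in *. pose proof (Rabs_pos (x / h - z)) as Ha. fold a in Ha.
  assert (a * a <= 1) by nra. assert (a * a <= Rabs (x / h)) by nra.
  repeat split; [apply Rmult_le_compat_l; lra|nra|nra].
Qed.

Lemma INR_Z_abs_nat z : INR (Z.abs_nat z) = Rabs (IZR z).
Proof. now rewrite INR_IZR_INZ, Nat2Z.inj_abs_nat, abs_IZR. Qed.

(* The third bound is what makes the net of the sparse set [K_ns n s] small. *)
Lemma grid_net n m h M (A : (nat -> R) -> Prop) : 0 < h ->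
  (forall x, A x -> norm1 n x <= h * M) -> M < INR m + 1 ->
  net (lattice_count n m) A (fun x c => norm2 n c <= norm2 n x /\
     rsum n (fun j => (x j - c j) ^ 2) <= INR n * h ^ 2 /\
     rsum n (fun j => (x j - c j) ^ 2) <= h * norm1 n x).
Proof.
  intros Hh HA Hm.
  apply (net_map _ _ _ _ _ (fun cz j => h * IZR (cz j)) (net_int_l1_ball n m)).
  intros x Hx. exists (fun j => round0 (x j / h)). split.
  - apply Nat.lt_succ_r, INR_lt. rewrite S_INR. apply Rle_lt_trans with M; [|exact Hm].
    rewrite natsum_INR.
    apply Rmult_le_reg_l with h; [exact Hh|]. eapply Rle_trans; [|apply HA, Hx].
    unfold norm1. rewrite <- rsum_scal. apply rsum_le; intros j _.
    rewrite INR_Z_abs_nat. destruct (grid_round_spec h (x j) Hh) as [Hr _].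
    rewrite Rabs_mult, (Rabs_pos_eq h) in Hr by lra. exact Hr.
  - intros cz Hc. rewrite !(rsum_ext n (fun j => (x j - h * IZR (cz j)) ^ 2)
                    (fun j => (x j - h * IZR (round0 (x j / h))) ^ 2))
      by (intros j Hj; now rewrite (Hc j Hj)).
    rewrite (norm2_ext n _ (fun j => h * IZR (round0 (x j / h)))) by (intros j Hj; now rewrite (Hc j Hj)).
    repeat split.
    + apply norm2_mono; intros j _. rewrite <- (pow2_abs (x j)), <- pow2_abs.
      apply pow_incr. split; [apply Rabs_pos|apply grid_round_spec, Hh].
    + rewrite <- (Rmult_1_r (INR n)), <- rsum_const, Rmult_comm, <- rsum_scal.
      apply rsum_le; intros j _. rewrite Rmult_1_r. apply grid_round_spec, Hh.
    + unfold norm1. rewrite <- rsum_scal. apply rsum_le; intros j _. apply grid_round_spec, Hh.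
Qed.

Definition nat_floor (M : R) : nat := Z.to_nat (Int_part M).

Lemma nat_floor_spec M : 0 <= M -> INR (nat_floor M) <= M < INR (nat_floor M) + 1.
Proof.
  intros HM. destruct (Int_part_nonneg_bounds M HM) as [[H0 H1] H2].
  unfold nat_floor. rewrite INR_IZR_INZ, Z2Nat.id by (apply le_IZR; exact H0). lra.
Qed.

Lemma ball_net n rho d : 0 < rho -> 0 < d ->
  log_net (INR n * (1 + ln (1 + 2 / d))) (fun x => norm2 n x <= rho)
    (fun x c => norm2 n c <= rho /\ norm2 n (fun j => x j - c j) <= rho * d).
Proof.
  intros Hr Hd. assert (Hlog : 0 <= ln (1 + 2 / d)).
  { apply ln_nonneg. assert (0 < 2 / d) by (apply Rdiv_lt_0_compat; lra). lra. }
  destruct n as [|n'].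
  - exists 1%nat. split; [lia|]. split; [simpl; rewrite ln_1; lra|].
    exists (fun _ _ => 0). intros x Hx. exists 0%nat. split; [lia|].
    unfold norm2; simpl. rewrite sqrt_0. split; nra.
  - set (n := S n'). assert (Hn : 0 < INR n) by (apply lt_0_INR; unfold n; lia).
    assert (Hsn : 0 < sqrt (INR n)) by (apply sqrt_lt_R0, Hn).
    set (M := INR n / d). assert (HM : 0 <= M) by (apply Rlt_le, Rdiv_lt_0_compat; lra).
    destruct (nat_floor_spec M HM) as [Hm1 Hm2]. set (m := nat_floor M) in *.
    set (h := rho * d / sqrt (INR n)).
    assert (Hh : 0 < h) by (apply Rdiv_lt_0_compat; nra).
    exists (lattice_count n m). split; [apply lattice_count_pos|]. split.
    + set (t := / (1 + d)). assert (Ht : 0 < t < 1).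
      { unfold t. split; [apply Rinv_0_lt_compat; lra|]. rewrite <- Rinv_1. apply Rinv_lt_contravar; lra. }
      eapply Rle_trans; [apply (ln_lattice_count_le t n m Ht)|].
      replace ((1 + t) / (1 - t)) with (1 + 2 / d) by (unfold t; field; lra).
      unfold t. rewrite Rinv_inv.
      assert (ln (1 + d) <= d) by (pose proof (ln_le_sub1 (1 + d)); lra).
      assert (INR m * d <= INR n) by (unfold M in Hm1; apply Rmult_le_reg_r with (/ d);
        [apply Rinv_0_lt_compat; lra|]; replace (INR m * d * / d) with (INR m) by (field; lra); exact Hm1).
      pose proof (pos_INR m). pose proof (ln_nonneg (1 + d) ltac:(lra)). nra.
    + eapply net_weaken; [apply (grid_net n m h M (fun x => norm2 n x <= rho) Hh)| |].
      * intros x Hx. replace (h * M) with (sqrt (INR n) * rho)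
          by (unfold h, M; rewrite <- (sqrt_sqrt (INR n)) at 3 by lra; field; lra).
        eapply Rle_trans; [apply norm1_le_norm2|]. apply Rmult_le_compat_l; lra.
      * exact Hm2.
      * intros x; exact (fun H => H).
      * intros x c Hx (H1 & H2 & _). split; [lra|].
        apply norm2_le; [nra|]. eapply Rle_trans; [exact H2|]. right.
        unfold h. field_simplify; [|lra]. rewrite pow2_sqrt by lra. field. lra.
Qed.

Lemma sparse_net n s dl A : 1 <= s -> 0 < dl -> 3 <= A ->
  log_net ((s / dl ^ 2 + 1) * ln A + 3 * INR n / A) (K_ns n s)
    (fun x c => norm2 n c <= 1 /\ norm2 n (fun j => x j - c j) <= dl).
Proof.
  intros Hs Hd HA. set (X := s / dl ^ 2).
  assert (HX : 0 < X) by (apply Rdiv_lt_0_compat; [lra|apply pow_lt; lra]).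
  set (m := S (nat_floor X)).
  assert (Hm : X < INR m <= X + 1)
    by (unfold m; rewrite S_INR; pose proof (nat_floor_spec X (Rlt_le _ _ HX)); lra).
  assert (Hsq : 0 < sqrt s) by (apply sqrt_lt_R0; lra).
  set (h := sqrt s / INR m). assert (Hh : 0 < h) by (apply Rdiv_lt_0_compat; lra).
  exists (lattice_count n m). split; [apply lattice_count_pos|]. split.
  - assert (Ht : 0 < / A < 1).
    { split; [apply Rinv_0_lt_compat; lra|]. rewrite <- Rinv_1. apply Rinv_lt_contravar; lra. }
    eapply Rle_trans; [apply (ln_lattice_count_le (/ A) n m Ht)|]. rewrite Rinv_inv.
    assert (Hg : ln ((1 + / A) / (1 - / A)) <= 3 / A).
    { eapply Rle_trans; [apply ln_le_sub1, Rdiv_lt_0_compat; lra|].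
      apply Rmult_le_reg_r with (A * (A - 1)); [nra|].
      replace (((1 + / A) / (1 - / A) - 1) * (A * (A - 1))) with (2 * A) by (field; lra).
      replace (3 / A * (A * (A - 1))) with (3 * (A - 1)) by (field; lra). lra. }
    pose proof (ln_nonneg A ltac:(lra)). pose proof (pos_INR n).
    replace (3 * INR n / A) with (INR n * (3 / A)) by (field; lra). fold X. nra.
  - eapply net_weaken; [apply (grid_net n m h (INR m) (K_ns n s) Hh)| |].
    + intros x [_ Hx]. unfold h. replace (sqrt s / INR m * INR m) with (sqrt s) by (field; lra). exact Hx.
    + lra.
    + intros x; exact (fun H => H).
    + intros x c [Hx1 Hx2] (H1 & _ & H3). split; [lra|].
      apply norm2_le; [lra|]. eapply Rle_trans; [exact H3|].
      apply Rle_trans with (h * sqrt s); [apply Rmult_le_compat_l; lra|].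
      unfold h. replace (sqrt s / INR m * sqrt s) with (s / INR m)
        by (rewrite <- (sqrt_sqrt s) at 1 by lra; field; lra).
      apply Rmult_le_reg_r with (INR m / dl ^ 2); [apply Rdiv_lt_0_compat; [lra|apply pow_lt; lra]|].
      replace (s / INR m * (INR m / dl ^ 2)) with X by (unfold X; field; lra).
      replace (dl ^ 2 * (INR m / dl ^ 2)) with (INR m) by (field; lra). lra.
Qed.

(** * Covering K^{R,Gamma}_{s1,s2} *)

Lemma frob_covered_by_nets Rk G n1 n2 s1 s2 eps ku kv ks du dv ds :
  net ku (K_ns n1 s1) (fun u c => norm2 n1 c <= 1 /\ norm2 n1 (fun i => u i - c i) <= du) ->
  net kv (K_ns n2 s2) (fun v c => norm2 n2 c <= 1 /\ norm2 n2 (fun j => v j - c j) <= dv) ->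
  net ks (fun sg => norm2 Rk sg <= G) (fun sg c => norm2 Rk (fun r => sg r - c r) <= ds) ->
  0 <= du + dv -> (du + dv) * G * sqrt (INR Rk) + ds * sqrt (INR Rk) <= eps ->
  frob_covered_by n1 n2 (K_RG Rk G n1 n2 s1 s2) eps (ku ^ Rk * kv ^ Rk * ks).
Proof.
  intros Hu Hv Hs Hd Heps.
  destruct (net_prod _ _ _ _ _ _ (net_prod _ _ _ _ _ _
    (net_pow (fun _ => 0) _ _ _ Rk Hu) (net_pow (fun _ => 0) _ _ _ Rk Hv)) Hs) as [cc Hcc].
  exists (fun i => lowrank Rk (snd (cc i)) (fst (fst (cc i))) (snd (fst (cc i)))).
  intros Z (sg & u & v & Huv & Hsg & HZ).
  destruct (Hcc ((u, v), sg)) as [i [Hi HQ]].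
  { repeat split; [apply Huv..|]; assumption. }
  exists i. split; [exact Hi|].
  destruct (cc i) as [[U V] S]. simpl in HQ |- *. destruct HQ as [[HU HV] HS].
  rewrite (frob_ext _ _ _ (fun a b => lowrank Rk sg u v a b - lowrank Rk S U V a b))
    by (intros; now rewrite HZ).
  eapply Rle_trans; [apply (frob_lowrank_sub_le n1 n2 Rk sg S u U v V du dv)|].
  - intros r Hr. destruct (Huv r Hr) as (_ & _ & _ & Hv1).
    destruct (HU r Hr), (HV r Hr). repeat split; try assumption; lra.
  - pose proof (sqrt_pos (INR Rk)).
    assert (norm1 Rk sg <= sqrt (INR Rk) * G)
      by (eapply Rle_trans; [apply norm1_le_norm2|apply Rmult_le_compat_l; assumption]).
    assert (norm1 Rk (fun r => sg r - S r) <= sqrt (INR Rk) * ds)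
      by (eapply Rle_trans; [apply norm1_le_norm2|apply Rmult_le_compat_l; assumption]).
    nra.
Qed.

Lemma frob_covered_by_one Rk G n1 n2 s1 s2 eps : sqrt (INR Rk) * G <= eps ->
  frob_covered_by n1 n2 (K_RG Rk G n1 n2 s1 s2) eps 1.
Proof.
  intros He. exists (fun _ _ _ => 0). intros Z (sg & u & v & Huv & Hsg & HZ).
  exists 0%nat. split; [lia|].
  rewrite (frob_ext _ _ _ (fun a b => lowrank Rk sg u v a b - lowrank Rk (fun _ => 0) u v a b)).
  2:{ intros. rewrite HZ by assumption. unfold lowrank.
      rewrite <- rsum_minus, Rminus_0_r. apply rsum_ext; intros; ring. }
  eapply Rle_trans; [apply (frob_lowrank_sub_le n1 n2 Rk sg (fun _ => 0) u u v v 0 0)|].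
  - intros r Hr. destruct (Huv r Hr) as (_ & _ & Hu & Hv).
    rewrite (norm2_ext n1 (fun i => u r i - u r i) (fun _ => 0 * 1)),
      (norm2_ext n2 (fun j => v r j - v r j) (fun _ => 0 * 1)), !norm2_scal, Rabs_R0 by (intros; ring).
    repeat split; lra.
  - rewrite (norm1_ext Rk (fun r => sg r - 0) sg) by (intros; ring).
    pose proof (norm1_le_norm2 Rk sg). pose proof (sqrt_pos (INR Rk)).
    assert (sqrt (INR Rk) * norm2 Rk sg <= sqrt (INR Rk) * G) by (apply Rmult_le_compat_l; assumption).
    lra.
Qed.

Definition log_covering_le (n1 n2 : nat) (M : (nat -> nat -> R) -> Prop) (eps B : R) : Prop :=
  exists k, frob_covered_by n1 n2 M eps k /\ (1 <= k)%nat /\ ln (INR k) <= B.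

Lemma log_covering_le_weaken n1 n2 M eps B B' :
  log_covering_le n1 n2 M eps B -> B <= B' -> log_covering_le n1 n2 M eps B'.
Proof. intros (k & Hc & Hk & HB) HBB'. exists k. repeat split; [assumption|assumption|lra]. Qed.

Lemma log_covering_le_nets Rk G n1 n2 s1 s2 eps du dv ds Lu Lv Ls :
  log_net Lu (K_ns n1 s1) (fun u c => norm2 n1 c <= 1 /\ norm2 n1 (fun i => u i - c i) <= du) ->
  log_net Lv (K_ns n2 s2) (fun v c => norm2 n2 c <= 1 /\ norm2 n2 (fun j => v j - c j) <= dv) ->
  log_net Ls (fun sg => norm2 Rk sg <= G) (fun sg c => norm2 Rk (fun r => sg r - c r) <= ds) ->
  0 <= du + dv -> (du + dv) * G * sqrt (INR Rk) + ds * sqrt (INR Rk) <= eps ->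
  log_covering_le n1 n2 (K_RG Rk G n1 n2 s1 s2) eps (INR Rk * Lu + INR Rk * Lv + Ls).
Proof.
  intros (ku & Hku & Lku & Nku) (kv & Hkv & Lkv & Nkv) (ks & Hks & Lks & Nks) Hd Heps.
  exists (ku ^ Rk * kv ^ Rk * ks)%nat. split; [eapply frob_covered_by_nets; eassumption|].
  assert (Hu : 0 < INR ku) by (apply lt_0_INR; lia).
  assert (Hv : 0 < INR kv) by (apply lt_0_INR; lia).
  assert (Hs : 0 < INR ks) by (apply lt_0_INR; lia).
  split.
  - pose proof (Nat.pow_le_mono_l 1 ku Rk Hku). pose proof (Nat.pow_le_mono_l 1 kv Rk Hkv).
    rewrite Nat.pow_1_l in *. nia.
  - rewrite !mult_INR, !pow_INR, !ln_mult, !ln_pow by (try apply Rmult_lt_0_compat; try apply pow_lt; assumption).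
    pose proof (pos_INR Rk). nra.
Qed.

Lemma log_covering_le_trivial Rk G n1 n2 s1 s2 eps B :
  sqrt (INR Rk) * G <= eps -> 0 <= B -> log_covering_le n1 n2 (K_RG Rk G n1 n2 s1 s2) eps B.
Proof.
  intros He HB. exists 1%nat. split; [now apply frob_covered_by_one|]. split; [lia|].
  simpl INR. rewrite ln_1. exact HB.
Qed.

Lemma unit_ball_net n s d : 0 < d ->
  log_net (INR n * (1 + ln (1 + 2 / d))) (K_ns n s)
    (fun x c => norm2 n c <= 1 /\ norm2 n (fun j => x j - c j) <= d).
Proof.
  intros Hd. eapply log_net_weaken; [apply (ball_net n 1 d); lra|lra|intros x Hx; apply Hx|].
  intros x c _ [H1 H2]. split; lra.
Qed.

Lemma weight_ball_net Rk G d : 0 < G -> 0 < d ->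
  log_net (INR Rk * (1 + ln (1 + 2 / d))) (fun sg => norm2 Rk sg <= G)
    (fun sg c => norm2 Rk (fun r => sg r - c r) <= G * d).
Proof.
  intros HG Hd. eapply log_net_weaken; [apply (ball_net Rk G d); lra|lra|intros x Hx; exact Hx|].
  intros x c _ [_ H]. exact H.
Qed.

Lemma one_plus_ln_le y c C : 0 < y <= 1 -> 0 < c -> 3 * (1 + c) <= C ->
  1 + ln (1 + c / y) <= ln (C / y).
Proof.
  intros Hy Hc HC. pose proof exp_le_3. pose proof (exp_pos 1).
  assert (Hcy : 0 < c / y) by (apply Rdiv_lt_0_compat; lra).
  rewrite <- (ln_exp 1) at 1. rewrite <- ln_mult by lra. apply ln_le; [nra|].
  replace (exp 1 * (1 + c / y)) with (exp 1 * (y + c) / y) by (field; lra).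
  unfold Rdiv. apply Rmult_le_compat_r; [apply Rlt_le, Rinv_0_lt_compat; lra|]. nra.
Qed.

Lemma sparse_log_le s n y dl A : 1 <= s -> 0 < y <= 1 -> y / 4 <= dl -> 3 <= A ->
  2 * s * A = 3 * y * n ->
  (s / dl ^ 2 + 1) * ln A + 3 * n / A <= 144 * (s / y ^ 2) * ln A.
Proof.
  intros Hs Hy Hdl HA EA.
  assert (HL : 1 <= ln A).
  { rewrite <- (ln_exp 1). apply ln_le; [apply exp_pos|]. pose proof exp_le_3. lra. }
  assert (Hy2 : 0 < y ^ 2) by (apply pow_lt; lra).
  set (X := s / y ^ 2).
  assert (HX : 1 <= X) by (unfold X; apply Rmult_le_reg_r with (y ^ 2); [lra|];
    unfold Rdiv; rewrite Rmult_assoc, Rinv_l by lra; simpl in *; nra).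
  assert (H1 : s / dl ^ 2 <= 16 * X).
  { unfold X. apply Rmult_le_reg_r with (dl ^ 2 * y ^ 2); [apply Rmult_lt_0_compat; [apply pow_lt|]; lra|].
    replace (s / dl ^ 2 * (dl ^ 2 * y ^ 2)) with (s * y ^ 2) by (field; lra).
    replace (16 * (s / y ^ 2) * (dl ^ 2 * y ^ 2)) with (s * (16 * dl ^ 2)) by (field; lra).
    assert (0 <= (4 * dl - y) * (4 * dl + y)) by (apply Rmult_le_pos; lra).
    apply Rmult_le_compat_l; [lra|]. simpl; nra. }
  assert (H2 : 3 * n / A <= 2 * X).
  { replace (3 * n / A) with (2 * s / y).
    2:{ unfold Rdiv. apply Rmult_eq_reg_r with (A * y); [|nra].
        replace (3 * n * / A * (A * y)) with (3 * y * n) by (field; lra).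
        replace (2 * s * / y * (A * y)) with (2 * s * A) by (field; lra). lra. }
    unfold X. apply Rmult_le_reg_r with (y ^ 2); [lra|].
    replace (2 * s / y * y ^ 2) with (2 * s * y) by (field; lra).
    replace (2 * (s / y ^ 2) * y ^ 2) with (2 * s) by (field; lra). nra. }
  assert (0 <= s / dl ^ 2) by (apply Rmult_le_pos; [lra|apply Rlt_le, Rinv_0_lt_compat, pow_lt; lra]).
  nra.
Qed.

Lemma ln_rate_nonneg Rk y C : (1 <= Rk)%nat -> 0 < y -> y <= C ->
  0 <= ln (C * sqrt (INR Rk) / y).
Proof.
  intros hR hy HC. pose proof (sqrt_INR_ge1 Rk hR). apply ln_nonneg.
  apply Rmult_le_reg_r with y; [exact hy|]. unfold Rdiv. rewrite Rmult_assoc, Rinv_l; nra.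
Qed.

(* The regimes are computed in the normalized scale [y = eps / (Gamma sqrt R)]. *)
Section Scaling.
Variables (Rk : nat) (G eps y : R).
Hypotheses (hR : (1 <= Rk)%nat) (hG : 1 <= G) (hy : 0 < y)
  (Ey : eps = y * G * sqrt (INR Rk)).

Let sR_facts : 1 <= sqrt (INR Rk) /\ sqrt (INR Rk) * sqrt (INR Rk) = INR Rk.
Proof. split; [now apply sqrt_INR_ge1|apply sqrt_sqrt, pos_INR]. Qed.

Lemma rate_scaling C : C * G * INR Rk / eps = C * sqrt (INR Rk) / y.
Proof.
  destruct sR_facts as [H1 H2]. rewrite Ey. set (sR := sqrt (INR Rk)) in *.
  rewrite <- H2. field; repeat split; lra.
Qed.

Lemma coeff_scaling s : 144 * G ^ 2 * INR Rk ^ 2 * s / eps ^ 2 = INR Rk * (144 * (s / y ^ 2)).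
Proof.
  destruct sR_facts as [H1 H2]. rewrite Ey. set (sR := sqrt (INR Rk)) in *.
  rewrite <- H2. field; repeat split; lra.
Qed.

Lemma ratio_scaling n s : 0 < s ->
  9 * eps * INR n / (6 * G * sqrt (INR Rk) * s) = 3 * y * INR n / (2 * s).
Proof.
  intros Hs. destruct sR_facts as [H1 H2]. rewrite Ey. field; repeat split; lra.
Qed.

Lemma ratio_ge3 n s : 1 <= s <= INR n -> 12 * G * sqrt (INR Rk * s / INR n) <= eps ->
  3 <= 3 * y * INR n / (2 * s).
Proof.
  intros Hs Hc. destruct sR_facts as [HsR _].
  assert (Hq : s / INR n <= sqrt (s / INR n)).
  { assert (H01 : 0 <= s / INR n <= 1).
    { split; [apply Rlt_le, Rdiv_lt_0_compat; lra|].
      apply Rmult_le_reg_r with (INR n); [lra|]. unfold Rdiv. rewrite Rmult_assoc, Rinv_l; lra. }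
    pose proof (sqrt_sqrt (s / INR n) (proj1 H01)). pose proof (sqrt_pos (s / INR n)).
    assert (sqrt (s / INR n) <= 1) by (rewrite <- sqrt_1; apply sqrt_le_1_alt; lra). nra. }
  assert (Esq : sqrt (INR Rk * s / INR n) = sqrt (INR Rk) * sqrt (s / INR n))
    by (rewrite <- sqrt_mult_alt by apply pos_INR; f_equal; field; lra).
  rewrite Ey, Esq in Hc.
  assert (12 * sqrt (s / INR n) <= y)
    by (apply Rmult_le_reg_r with (G * sqrt (INR Rk)); [nra|]; lra).
  apply Rmult_le_reg_r with (2 * s); [lra|].
  replace (3 * y * INR n / (2 * s) * (2 * s)) with (3 * y * INR n) by (field; lra).
  assert (12 * s <= y * INR n).
  { replace (12 * s) with (12 * (s / INR n) * INR n) by (field; lra).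
    apply Rmult_le_compat_r; lra. }
  nra.
Qed.

End Scaling.

Lemma sparsity_threshold_le Rk G s1 s2 n1 n2 : 0 <= G -> s1 / INR n1 <= s2 / INR n2 ->
  12 * G * sqrt (INR Rk * s1 / INR n1) <= 12 * G * sqrt (INR Rk * s2 / INR n2).
Proof.
  intros HG Hratio. apply Rmult_le_compat_l; [lra|]. apply sqrt_le_1_alt.
  unfold Rdiv. rewrite !Rmult_assoc. apply Rmult_le_compat_l; [apply pos_INR|exact Hratio].
Qed.

Lemma sparsity_ratio_antitone y s1 s2 n1 n2 : 0 < y -> 1 <= s1 <= n1 -> 1 <= s2 <= n2 ->
  s1 / n1 <= s2 / n2 -> 3 * y * n2 / (2 * s2) <= 3 * y * n1 / (2 * s1).
Proof.
  intros Hy Hs1 Hs2 Hratio.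
  assert (s1 * n2 <= s2 * n1).
  { apply Rmult_le_reg_r with (/ (n1 * n2)); [apply Rinv_0_lt_compat; nra|].
    replace (s1 * n2 * / (n1 * n2)) with (s1 / n1) by (field; lra).
    replace (s2 * n1 * / (n1 * n2)) with (s2 / n2) by (field; lra). exact Hratio. }
  apply Rmult_le_reg_r with (2 * s1 * s2); [nra|].
  replace (3 * y * n2 / (2 * s2) * (2 * s1 * s2)) with (3 * y * (s1 * n2)) by (field; lra).
  replace (3 * y * n1 / (2 * s1) * (2 * s1 * s2)) with (3 * y * (s2 * n1)) by (field; lra).
  apply Rmult_le_compat_l; lra.
Qed.

Lemma scaled_eps_spec Rk G eps c : (1 <= Rk)%nat -> 1 <= G -> 0 < eps ->
  eps < c * G * sqrt (INR Rk) ->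
  0 < eps / (G * sqrt (INR Rk)) < c /\ eps = eps / (G * sqrt (INR Rk)) * G * sqrt (INR Rk).
Proof.
  intros hR hG he hlt. pose proof (sqrt_INR_ge1 Rk hR).
  split; [split|field; lra].
  - apply Rdiv_lt_0_compat; nra.
  - apply Rmult_lt_reg_r with (G * sqrt (INR Rk)); [nra|].
    unfold Rdiv. rewrite Rmult_assoc, Rinv_l by nra. lra.
Qed.

Lemma log_covering_dense Rk G s1 s2 n1 n2 eps :
  (1 <= Rk)%nat -> 1 <= G -> 0 < eps -> eps < 6 * G * sqrt (INR Rk) ->
  log_covering_le n1 n2 (K_RG Rk G n1 n2 s1 s2) eps
    (INR Rk * (INR n1 + INR n2 + 1) * ln (36 * G * INR Rk / eps)).
Proof.
  intros hR hG he he6. pose proof (sqrt_INR_ge1 Rk hR).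
  destruct (scaled_eps_spec Rk G eps 6 hR hG he he6) as [Hy Ey].
  set (y := eps / (G * sqrt (INR Rk))) in *.
  rewrite (rate_scaling Rk G eps y hR hG (proj1 Hy) Ey).
  pose proof (ln_rate_nonneg Rk y 36 hR (proj1 Hy) ltac:(lra)) as HL.
  pose proof (pos_INR n1). pose proof (pos_INR n2). pose proof (pos_INR Rk).
  destruct (Rle_lt_dec (sqrt (INR Rk) * G) eps) as [Htriv|Hsmall].
  - apply log_covering_le_trivial; [exact Htriv|]. apply Rmult_le_pos; [nra|exact HL].
  - assert (Hy1 : y < 1) by nra.
    eapply log_covering_le_weaken.
    + apply (log_covering_le_nets _ _ _ _ _ _ _ (y / 3) (y / 3) (G * (y / 3)));
        [apply unit_ball_net|apply unit_ball_net|apply weight_ball_net|..]; lra.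
    + replace (2 / (y / 3)) with (6 / y) by (field; lra).
      pose proof (one_plus_ln_le y 6 (36 * sqrt (INR Rk)) ltac:(lra) ltac:(lra) ltac:(lra)).
      apply Rle_trans with (INR Rk * (INR n1 + INR n2 + 1) * (1 + ln (1 + 6 / y))); [right; ring|].
      apply Rmult_le_compat_l; [nra|assumption].
Qed.

Lemma log_covering_sparse_left Rk G s1 s2 n1 n2 eps :
  (1 <= Rk)%nat -> 1 <= G -> 0 < eps -> eps < 6 * G * sqrt (INR Rk) ->
  1 <= s1 -> s1 <= INR n1 -> 12 * G * sqrt (INR Rk * s1 / INR n1) <= eps ->
  log_covering_le n1 n2 (K_RG Rk G n1 n2 s1 s2) eps
    (144 * G ^ 2 * INR Rk ^ 2 * s1 / eps ^ 2
       * ln (9 * eps * INR n1 / (6 * G * sqrt (INR Rk) * s1))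
     + INR Rk * (INR n2 + 1) * ln (36 * G * INR Rk / eps)).
Proof.
  intros hR hG he he6 hs1 hs1n hc. pose proof (sqrt_INR_ge1 Rk hR).
  destruct (scaled_eps_spec Rk G eps 6 hR hG he he6) as [Hy Ey].
  set (y := eps / (G * sqrt (INR Rk))) in *.
  rewrite (rate_scaling Rk G eps y hR hG (proj1 Hy) Ey), (coeff_scaling Rk G eps y hR hG (proj1 Hy) Ey),
    (ratio_scaling Rk G eps y hR hG Ey) by lra.
  pose proof (ratio_ge3 Rk G eps y hR hG Ey n1 s1 (conj hs1 hs1n) hc) as HA.
  set (A := 3 * y * INR n1 / (2 * s1)) in *.
  assert (HlA : 0 <= ln A) by (apply ln_nonneg; lra).
  pose proof (ln_rate_nonneg Rk y 36 hR (proj1 Hy) ltac:(lra)) as HL.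
  pose proof (pos_INR n2). pose proof (pos_INR Rk).
  assert (0 <= s1 / y ^ 2) by (apply Rmult_le_pos; [lra|apply Rlt_le, Rinv_0_lt_compat, pow_lt; lra]).
  destruct (Rle_lt_dec (sqrt (INR Rk) * G) eps) as [Htriv|Hsmall].
  - apply log_covering_le_trivial; [exact Htriv|].
    assert (0 <= INR Rk * (144 * (s1 / y ^ 2))) by nra.
    apply Rplus_le_le_0_compat; apply Rmult_le_pos; nra.
  - assert (Hy1 : y < 1) by nra.
    eapply log_covering_le_weaken.
    + apply (log_covering_le_nets _ _ _ _ _ _ _ (y / 2) (y / 4) (G * (y / 4)));
        [apply (sparse_net n1 s1 (y / 2) A)|apply unit_ball_net|apply weight_ball_net|..]; lra.
    + replace (2 / (y / 4)) with (8 / y) by (field; lra).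
      pose proof (one_plus_ln_le y 8 (36 * sqrt (INR Rk)) ltac:(lra) ltac:(lra) ltac:(lra)).
      pose proof (sparse_log_le s1 (INR n1) y (y / 2) A hs1 ltac:(lra) ltac:(lra) HA
        ltac:(unfold A; field; lra)).
      assert (INR Rk * (INR n2 * (1 + ln (1 + 8 / y))) + INR Rk * (1 + ln (1 + 8 / y))
              <= INR Rk * (INR n2 + 1) * ln (36 * sqrt (INR Rk) / y))
        by (rewrite Rmult_assoc, <- Rmult_plus_distr_l; apply Rmult_le_compat_l; nra).
      nra.
Qed.

Lemma log_covering_sparse Rk G s1 s2 n1 n2 eps :
  (1 <= Rk)%nat -> 1 <= G -> 0 < eps -> eps < 6 * G * sqrt (INR Rk) ->
  1 <= s1 -> s1 <= INR n1 -> 1 <= s2 -> s2 <= INR n2 -> s1 / INR n1 <= s2 / INR n2 ->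
  12 * G * sqrt (INR Rk * s2 / INR n2) <= eps ->
  log_covering_le n1 n2 (K_RG Rk G n1 n2 s1 s2) eps
    (144 * G ^ 2 * INR Rk ^ 2 * (s1 + s2) / eps ^ 2
       * ln (9 * eps * INR n1 / (6 * G * sqrt (INR Rk) * s1))
     + INR Rk * ln (18 * G * INR Rk / eps)).
Proof.
  intros hR hG he he6 hs1 hs1n hs2 hs2n hratio hc2. pose proof (sqrt_INR_ge1 Rk hR).
  pose proof (Rle_trans _ _ _ (sparsity_threshold_le Rk G s1 s2 n1 n2 ltac:(lra) hratio) hc2) as hc1.
  destruct (scaled_eps_spec Rk G eps 6 hR hG he he6) as [Hy Ey].
  set (y := eps / (G * sqrt (INR Rk))) in *.
  rewrite (rate_scaling Rk G eps y hR hG (proj1 Hy) Ey), (coeff_scaling Rk G eps y hR hG (proj1 Hy) Ey),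
    (ratio_scaling Rk G eps y hR hG Ey) by lra.
  pose proof (ratio_ge3 Rk G eps y hR hG Ey n1 s1 (conj hs1 hs1n) hc1) as HA1.
  pose proof (ratio_ge3 Rk G eps y hR hG Ey n2 s2 (conj hs2 hs2n) hc2) as HA2.
  set (A1 := 3 * y * INR n1 / (2 * s1)) in *. set (A2 := 3 * y * INR n2 / (2 * s2)) in *.
  assert (HA21 : ln A2 <= ln A1)
    by (apply ln_le; [lra|]; apply sparsity_ratio_antitone; lra).
  assert (HlA : 0 <= ln A2) by (apply ln_nonneg; lra).
  pose proof (ln_rate_nonneg Rk y 18 hR (proj1 Hy) ltac:(lra)) as HL.
  pose proof (pos_INR Rk).
  assert (0 <= s1 / y ^ 2) by (apply Rmult_le_pos; [lra|apply Rlt_le, Rinv_0_lt_compat, pow_lt; lra]).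
  assert (0 <= s2 / y ^ 2) by (apply Rmult_le_pos; [lra|apply Rlt_le, Rinv_0_lt_compat, pow_lt; lra]).
  replace ((s1 + s2) / y ^ 2) with (s1 / y ^ 2 + s2 / y ^ 2) by (field; lra).
  destruct (Rle_lt_dec (sqrt (INR Rk) * G) eps) as [Htriv|Hsmall].
  - apply log_covering_le_trivial; [exact Htriv|].
    assert (0 <= INR Rk * (144 * (s1 / y ^ 2 + s2 / y ^ 2))) by nra.
    apply Rplus_le_le_0_compat; apply Rmult_le_pos; nra.
  - assert (Hy1 : y < 1) by nra.
    eapply log_covering_le_weaken.
    + apply (log_covering_le_nets _ _ _ _ _ _ _ (y / 4) (y / 4) (G * (y / 2)));
        [apply (sparse_net n1 s1 (y / 4) A1)|apply (sparse_net n2 s2 (y / 4) A2)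
        |apply weight_ball_net|..]; lra.
    + replace (2 / (y / 2)) with (4 / y) by (field; lra).
      pose proof (one_plus_ln_le y 4 (18 * sqrt (INR Rk)) ltac:(lra) ltac:(lra) ltac:(lra)).
      pose proof (sparse_log_le s1 (INR n1) y (y / 4) A1 hs1 ltac:(lra) ltac:(lra) HA1
        ltac:(unfold A1; field; lra)).
      pose proof (sparse_log_le s2 (INR n2) y (y / 4) A2 hs2 ltac:(lra) ltac:(lra) HA2
        ltac:(unfold A2; field; lra)).
      assert (144 * (s2 / y ^ 2) * ln A2 <= 144 * (s2 / y ^ 2) * ln A1)
        by (apply Rmult_le_compat_l; lra).
      nra.
Qed.

Lemma frob_covering_number_exists n1 n2 M eps k :
  frob_covered_by n1 n2 M eps k -> exists N, is_frob_covering_number n1 n2 M eps N.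
Proof.
  intros Hk.
  destruct (dec_inh_nat_subset_has_unique_least_element (frob_covered_by n1 n2 M eps))
    as (N & [HN Hmin] & _); [intros; apply classic|now exists k|].
  exists N. split; assumption.
Qed.

Lemma ln_frob_covering_number_le n1 n2 M eps N B :
  is_frob_covering_number n1 n2 M eps N -> log_covering_le n1 n2 M eps B -> ln (INR N) <= B.
Proof.
  intros [_ Hmin] (k & Hk & Hk1 & HB). eapply Rle_trans; [|exact HB].
  destruct N as [|N].
  - simpl INR. rewrite ln_0. apply ln_nonneg, (le_INR 1), Hk1.
  - apply ln_le; [apply lt_0_INR; lia|apply le_INR, Hmin, Hk].
Qed.

Theorem mainTheorem10 (Rk : nat) (Gamma s1 s2 : R) (n1 n2 : nat) (eps : R)
  (hR : (1 <= Rk)%nat) (hG : 1 <= Gamma)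
  (hs1 : 1 <= s1) (hs1n : s1 <= INR n1)
  (hs2 : 1 <= s2) (hs2n : s2 <= INR n2)
  (hratio : s1 / INR n1 <= s2 / INR n2)
  (heps0 : 0 < eps) (heps1 : eps < 6 * Gamma * sqrt (INR Rk)) :
  exists k : nat,
    is_frob_covering_number n1 n2 (K_RG Rk Gamma n1 n2 s1 s2) eps k /\
    (eps < 12 * Gamma * sqrt (INR Rk * s1 / INR n1) ->
       ln (INR k) <= INR Rk * (INR n1 + INR n2 + 1)
                       * ln (36 * Gamma * INR Rk / eps)) /\
    (12 * Gamma * sqrt (INR Rk * s1 / INR n1) <= eps ->
     eps < 12 * Gamma * sqrt (INR Rk * s2 / INR n2) ->
       ln (INR k) <= 144 * Gamma ^ 2 * INR Rk ^ 2 * s1 / eps ^ 2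
                       * ln (9 * eps * INR n1 / (6 * Gamma * sqrt (INR Rk) * s1))
                     + INR Rk * (INR n2 + 1) * ln (36 * Gamma * INR Rk / eps)) /\
    (12 * Gamma * sqrt (INR Rk * s2 / INR n2) <= eps ->
       ln (INR k) <= 144 * Gamma ^ 2 * INR Rk ^ 2 * (s1 + s2) / eps ^ 2
                       * ln (9 * eps * INR n1 / (6 * Gamma * sqrt (INR Rk) * s1))
                     + INR Rk * ln (18 * Gamma * INR Rk / eps)).
Proof.
  destruct (log_covering_dense Rk Gamma s1 s2 n1 n2 eps hR hG heps0 heps1) as (k0 & Hk0 & _).
  destruct (frob_covering_number_exists _ _ _ _ _ Hk0) as [N HN].
  exists N. split; [exact HN|]. split; [|split].
  - intros _. apply (ln_frob_covering_number_le _ _ _ _ _ _ HN).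
    now apply log_covering_dense.
  - intros hc1 _. apply (ln_frob_covering_number_le _ _ _ _ _ _ HN).
    now apply log_covering_sparse_left.
  - intros hc2. apply (ln_frob_covering_number_le _ _ _ _ _ _ HN).
    now apply log_covering_sparse.
Qed.
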